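(* Let $\mathbf{X}\sim\mathcal{MSP}(\mathbf{0},\boldsymbol{\Sigma}^{\mathrm{row}},\kappa)$ be a $p$-variate $L^2$-continuous process with mean zero on a compact interval $\mathcal{T}=\mathcal{T}_1\cup\dots\cup\mathcal{T}_d$ (pairwise disjoint subintervals), with separable covariance operator $\mathcal{C}=\boldsymbol{\Sigma}^{\mathrm{row}}\mathcal{K}$ and kernel $\mathbf{K}(s,t)=\boldsymbol{\Sigma}^{\mathrm{row}}\kappa(s,t)$. Let $(\lambda_i^{\ker},\xi_i)$, $i=1,\dots,m$, be the $m$ largest eigenpairs of $\mathcal{K}$ (with $\lambda_m^{\ker}>0$), $(\lambda^{\mathrm{row}}_j,\mathbf{v}^{\mathrm{row}}_j)$, $j=1,\dots,p$, the eigenpairs of $\boldsymbol{\Sigma}^{\mathrm{row}}$, $v^{\mathrm{row}}_{j,k}=\mathbf{e}_k'\mathbf{v}^{\mathrm{row}}_j$, and $M=mp$. Then for each $k\in\{1,\dots,p\}$ and $a\in\{1,\dots,d\}$, $$\Theta_{k,\mathcal{T}_a}(\mathbf{X},\mathbf{0};\boldsymbol{\Sigma}^{\mathrm{row}}\kappa,M)=\sum_{i=1}^m\sum_{j=1}^p\frac{1}{\lambda^{\ker}_i\lambda^{\mathrm{row}}_j}\Big(\langle X_k,\xi_i\rangle_{\mathcal{T}_a}v^{\mathrm{row}}_{j,k}\sum_{l=1}^p\langle X_l,\xi_i\rangle_{\mathcal{T}}v^{\mathrm{row}}_{j,l}\Big).$$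
   Context: $\boldsymbol{\Sigma}^{\mathrm{row}}$ is a $p\times p$ symmetric positive definite matrix, $\kappa$ a positive definite kernel, and $\mathcal{K}$ the integral operator with kernel $\kappa$; $\langle f,g\rangle_{\mathcal{T}_a}=\int_{\mathcal{T}_a}fg$, $\langle\mathbf{x},\mathbf{y}\rangle=\sum_j\int_{\mathcal{T}}x_jy_j$. The eigenfunctions of $\mathcal{C}$ are taken as $\xi_i\mathbf{v}^{\mathrm{row}}_j$ with eigenvalues $\lambda^{\ker}_i\lambda^{\mathrm{row}}_j$, and $\mathrm{fMMD}^2(\mathbf{Y},\boldsymbol{\mu};\mathbf{K},M)=\sum_{i,j}(\lambda^{\ker}_i\lambda^{\mathrm{row}}_j)^{-1}\langle\mathbf{Y}-\boldsymbol{\mu},\xi_i\mathbf{v}^{\mathrm{row}}_j\rangle^2$ over these $M=mp$ eigenpairs. For a set $Q\subseteq\{1,\dots,p\}\times\{1,\dots,d\}$, $\hat{\mathbf{X}}^Q$ has $\hat X^Q_j(t)=X_j(t)$ if $t\in\mathcal{T}_b$ with $(j,b)\in Q$ and $\hat X^Q_j(t)=\mu_j(t)$ otherwise (here $\boldsymbol{\mu}=\mathbf{0}$). $\Theta_{k,\mathcal{T}_a}(\mathbf{X},\boldsymbol{\mu};\mathbf{K},M)=\sum_{Q\not\ni(k,a)}\frac{|Q|!(pd-|Q|-1)!}{(pd)!}[v(Q\cup\{(k,a)\})-v(Q)]$ with $v(Q)=\mathrm{fMMD}^2(\hat{\mathbf{X}}^Q,\boldsymbol{\mu};\mathbf{K},M)$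 (Shapley value of cell $(k,a)$). *)

From HB Require Import structures.
From mathcomp Require Import all_boot all_order all_algebra.
From mathcomp Require Import all_classical all_reals all_analysis.
Set Implicit Arguments. Unset Strict Implicit. Unset Printing Implicit Defensive.
Import Order.TTheory GRing.Theory Num.Theory.
Import numFieldNormedType.Exports.
Local Open Scope classical_set_scope.
Local Open Scope ring_scope.

Section Defs.
Variable R : realType.
Notation mu := (@lebesgue_measure R).

Definition Tset (t0 t1 : R) : set R := [set` `[t0, t1]].

Definition ip (A : set R) (f g : R -> R) : R :=
  Rintegral mu A (fun t => f t * g t).

Definition sq_int (A : set R) (f : R -> R) : Prop :=
  measurable_fun A f /\ mu.-integrable A (fun t => (f t ^+ 2)%:E).

Definition spd p (S : 'M[R]_p) : Prop :=
  S^T = S /\ forall x : 'cV[R]_p, x != 0 -> 0 < (x^T *m S *m x) 0 0.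

Definition pd_kernel (A : set R) (kappa : R -> R -> R) : Prop :=
  (forall s t, kappa s t = kappa t s) /\
  forall (n : nat) (tt : 'I_n -> R) (c : 'I_n -> R),
    (forall i, A (tt i)) ->
    0 <= \sum_(i < n) \sum_(j < n) c i * c j * kappa (tt i) (tt j).

Definition kop (A : set R) (kappa : R -> R -> R) (f : R -> R) : R -> R :=
  fun s => Rintegral mu A (fun t => kappa s t * f t).

(* X^Q : X_j(t) on cells (j,b) in Q, and mu_j(t) = 0 otherwise *)
Definition Xhat p d (Tsub : 'I_d -> interval R) (Q : {set 'I_p * 'I_d})
  (X : 'I_p -> R -> R) : 'I_p -> R -> R :=
  fun j t => if `[< exists b : 'I_d, (j, b) \in Q /\ [set` Tsub b] t >]
             then X j t else 0.

(* fMMD^2(Y, 0; K, M) over the M = m p eigenpairs xi_i v_j,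
   v_j = j-th column of V, so v_{j,l} = V l j *)
Definition fMMD2 m p (T : set R) (lamk : 'I_m -> R) (xi : 'I_m -> R -> R)
  (lamr : 'I_p -> R) (V : 'M[R]_p) (Y : 'I_p -> R -> R) : R :=
  \sum_(i < m) \sum_(j < p)
    (lamk i * lamr j)^-1 * (\sum_(l < p) ip T (Y l) (xi i) * V l j) ^+ 2.

Definition shapley p d (v : {set 'I_p * 'I_d} -> R) (k : 'I_p) (a : 'I_d) : R :=
  \sum_(Q : {set 'I_p * 'I_d} | (k, a) \notin Q)
    ((#|Q| `! * (p * d - #|Q| - 1) `!)%:R / ((p * d) `!)%:R)
      * (v ((k, a) |: Q) - v Q).

Definition Theta m p d (T : set R) (Tsub : 'I_d -> interval R)
  (lamk : 'I_m -> R) (xi : 'I_m -> R -> R) (lamr : 'I_p -> R) (V : 'M[R]_p)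
  (X : 'I_p -> R -> R) (k : 'I_p) (a : 'I_d) : R :=
  shapley (fun Q => fMMD2 T lamk xi lamr V (Xhat Tsub Q X)) k a.

End Defs.

From HB Require Import structures.
From mathcomp Require Import all_boot all_order all_algebra.
From mathcomp Require Import all_classical all_reals all_analysis.
From mathcomp Require Import measurable_realfun zify ring lra.
Import Order.TTheory GRing.Theory Num.Theory.
Import numFieldNormedType.Exports.
Local Open Scope classical_set_scope.
Local Open Scope ring_scope.

Set Implicit Arguments. Unset Strict Implicit. Unset Printing Implicit Defensive.

(* Restricting X to the cells in Q splits every inner product over T into its
   pieces over the cells T_b, so the game Q |-> fMMD^2(X^Q) is a weighted sum of
   squares of additive games Q |-> sum_(x in Q) u x, with
   u (l, b) = <X_l, xi_i>_{T_b} v_{j,l}.  The Shapley value is linear, and for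
   the square of an additive game it is u e * sum_x u x: the marginal
   contribution of e to a coalition Q is u e ^ 2 + 2 u e sum_(c in Q) u c, the
   Shapley weights of the coalitions avoiding e sum to 1, and any other player c
   belongs to such coalitions with total weight 1/2, because complementing Q
   among the players other than e preserves the weights. *)

Section ShapleyValue.
Variables (R : numFieldType) (I : finType).

Definition shapley_weight (n s : nat) : R := (s`! * (n - s - 1)`!)%:R / (n`!)%:R.

Definition shapley_value (v : {set I} -> R) (e : I) : R :=
  \sum_(Q : {set I} | e \notin Q) shapley_weight #|I| #|Q| * (v (e |: Q) - v Q).

Lemma eq_shapley_value (v v' : {set I} -> R) e :
  v =1 v' -> shapley_value v e = shapley_value v' e.
Proof. by move=> vv'; apply: eq_bigr => Q _; rewrite !vv'. Qed.

Lemma shapley_valueD (J : Type) (r : seq J) (P : pred J) (v : J -> {set I} -> R) e :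
  shapley_value (fun Q => \sum_(i <- r | P i) v i Q) e
  = \sum_(i <- r | P i) shapley_value (v i) e.
Proof.
rewrite /shapley_value exchange_big /=; apply: eq_bigr => Q _.
by rewrite -sumrB big_distrr.
Qed.

Lemma shapley_valueZ (c : R) (v : {set I} -> R) e :
  shapley_value (fun Q => c * v Q) e = c * shapley_value v e.
Proof.
rewrite /shapley_value big_distrr /=; apply: eq_bigr => Q _; ring.
Qed.

Lemma sum_subsets_by_card (A : {set I}) (F : nat -> R) :
  \sum_(Q : {set I} | Q \subset A) F #|Q| = \sum_(s < #|A|.+1) 'C(#|A|, s)%:R * F s.
Proof.
rewrite (partition_big (fun Q : {set I} => inord #|Q| : 'I_#|A|.+1) xpredT) //=.
apply: eq_bigr => s _.
rewrite (eq_bigr (fun _ => F s)); last first.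
  by move=> Q /andP[sQA /eqP <-]; rewrite inordK // ltnS subset_leq_card.
rewrite sumr_const -cards_draws mulr_natl; congr (_ *+ _); apply: eq_card => Q.
rewrite !inE -topredE /=; have [sQA|//] := boolP (Q \subset A).
have ltQA : (#|Q| < #|A|.+1)%N by rewrite ltnS subset_leq_card.
by apply/eqP/eqP => [<-|eQs]; [rewrite inordK | apply: val_inj; rewrite /= inordK].
Qed.

Lemma sum_shapley_weight e : \sum_(Q : {set I} | e \notin Q) shapley_weight #|I| #|Q| = 1.
Proof.
have cardCe : #|I| = #|~: [set e]|.+1.
  by rewrite cardsC1 prednK //; apply/card_gt0P; exists e.
rewrite (eq_bigl (fun Q : {set I} => Q \subset ~: [set e])); last first.
  by move=> Q; rewrite finset.subsetC finset.sub1set inE.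
rewrite cardCe sum_subsets_by_card; set N := #|~: [set e]|.
rewrite (eq_bigr (fun _ => (N`!)%:R / (N.+1`!)%:R)); last first.
  move=> s _; rewrite /shapley_weight mulrA -natrM subnAC subn1 bin_fact //.
  by rewrite -ltnS.
by rewrite sumr_const card_ord -[_ *+ _]mulr_natl mulrA -natrM -factS divff.
Qed.

Lemma shapley_weight_sym n s t : (s + t).+1 = n ->
  shapley_weight n t = shapley_weight n s.
Proof.
move=> <-; rewrite /shapley_weight mulnC.
have -> : ((s + t).+1 - t - 1 = s)%N by lia.
by have -> : ((s + t).+1 - s - 1 = t)%N by lia.
Qed.

Definition flip_but (e : I) (Q : {set I}) : {set I} := [set x | (x != e) (+) (x \in Q)].

Lemma flip_butK e : involutive (flip_but e).
Proof. by move=> Q; apply/setP => x; rewrite !inE addKb. Qed.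

Lemma card_flip_but e (Q : {set I}) : e \notin Q -> (#|Q| + #|flip_but e Q|).+1 = #|I|.
Proof.
move=> eQ; have -> : flip_but e Q = ~: Q :\ e.
  by apply/setP => x; rewrite !inE; case: eqP => [->|_]; rewrite ?(negbTE eQ).
by rewrite -(cardsC Q) (cardsD1 e (~: Q)) inE eQ addnS.
Qed.

Lemma sum_shapley_weight_mem e c : c != e ->
  \sum_(Q : {set I} | e \notin Q) shapley_weight #|I| #|Q| * (c \in Q)%:R = 2^-1.
Proof.
move=> ce; set S := (X in X = _).
have S_compl : S = \sum_(Q : {set I} | e \notin Q) shapley_weight #|I| #|Q| * (c \notin Q)%:R.
  rewrite /S (reindex_inj (inv_inj (flip_butK e))) /=.
  apply: eq_big => [Q|Q]; rewrite inE eqxx //= => eQ.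
  by rewrite inE ce addTb (shapley_weight_sym (s := #|Q|)) // (card_flip_but eQ).
have SS : S + S = 1.
  rewrite [X in _ + X]S_compl -big_split -[RHS](sum_shapley_weight e) /=.
  by apply: eq_bigr => Q _; case: (c \in Q); rewrite ?mulr0 ?mulr1 ?addr0 ?add0r.
have two_neq0 : (2 : R) != 0 by rewrite pnatr_eq0.
by apply: (mulIf two_neq0); rewrite mulVf // mulr_natr mulr2n.
Qed.

Lemma shapley_value_sqr_sum (u : I -> R) e :
  shapley_value (fun Q => (\sum_(x in Q) u x) ^+ 2) e = u e * \sum_x u x.
Proof.
pose S (Q : {set I}) := \sum_(c | c != e) u c * (c \in Q)%:R.
have sum_in (Q : {set I}) : e \notin Q -> \sum_(x in Q) u x = S Q.
  move=> eQ; rewrite big_mkcond (bigD1 e) //= (negbTE eQ) add0r.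
  by apply: eq_bigr => c _; case: (c \in Q); rewrite ?mulr1 ?mulr0.
have half_S c : c != e ->
    \sum_(Q : {set I} | e \notin Q) shapley_weight #|I| #|Q| * (u c * (c \in Q)%:R)
    = u c / 2.
  move=> ce; under eq_bigr do rewrite mulrCA.
  by rewrite -big_distrr /= sum_shapley_weight_mem.
rewrite /shapley_value.
under eq_bigr => Q eQ.
  rewrite big_setU1 //= sum_in //.
  have -> : (u e + S Q) ^+ 2 - S Q ^+ 2 = u e ^+ 2 + 2 * u e * S Q by ring.
  rewrite mulrDr [X in _ + X]mulrCA.
  over.
rewrite big_split /= -big_distrl /= sum_shapley_weight mul1r -big_distrr /=.
under eq_bigr do rewrite big_distrr.
rewrite exchange_big /=.
under eq_bigr => c ce do rewrite half_S //.
rewrite [in RHS](bigD1 e) //= mulrDr big_distrr /= big_distrr /=; congr (_ + _).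
by apply: eq_bigr => c _; field.
Qed.

End ShapleyValue.

Lemma shapleyE (R : realType) p d (v : {set 'I_p * 'I_d} -> R) k a :
  shapley v k a = shapley_value v (k, a).
Proof. by rewrite /shapley /shapley_value card_prod !card_ord. Qed.

Section Integration.
Variables (d : measure_display) (T : measurableType d) (R : realType).
Variable mu : {measure set T -> \bar R}.

Lemma integrable_mul_of_sqr (D : set T) (f g : T -> R) : measurable D ->
  measurable_fun D f -> mu.-integrable D (fun t => (f t ^+ 2)%:E) ->
  measurable_fun D g -> mu.-integrable D (fun t => (g t ^+ 2)%:E) ->
  mu.-integrable D (EFin \o (fun t => f t * g t)).
Proof.
move=> mD mf if2 mg ig2.
apply: (le_integrable mD _ _ (integrableD mD if2 ig2)).
  exact/measurable_EFinP/measurable_funM.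
move=> t Dt /=; rewrite lee_fin (ger0_norm (addr_ge0 (sqr_ge0 _) (sqr_ge0 _))).
by rewrite ler_norml; apply/andP; split; nra.
Qed.

Lemma Rintegral_bigsetU (I : eqType) (F : I -> set T) (f : T -> R) (s : seq I) :
  (forall i, measurable (F i)) -> uniq s -> trivIset [set` s] F ->
  mu.-integrable (\big[setU/set0]_(i <- s) F i) (EFin \o f) ->
  \int[mu]_(x in \big[setU/set0]_(i <- s) F i) f x = \sum_(i <- s) \int[mu]_(x in F i) f x.
Proof.
move=> mF us tF intf.
have mU : measurable (\big[setU/set0]_(i <- s) F i) by apply: bigsetU_measurable.
rewrite /Rintegral integral_bigsetU_EFin //; last exact: measurable_int intf.
rewrite [RHS]big_seq [in LHS]big_seq sum_fine // => i si.
have Fi_sub : F i `<=` \big[setU/set0]_(j <- s) F j.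
  by rewrite (big_rem i si) /=; apply: subsetUl.
exact: integrable_fin_num (integrableS mU (mF i) Fi_sub intf).
Qed.
End Integration.

Section Cells.
Variables (R : realType) (d : nat) (T : set R) (Tsub : 'I_d -> interval R).
Notation mu := (@lebesgue_measure R).
Hypothesis mT : measurable T.
Hypothesis Tsub_sub : forall b, [set` Tsub b] `<=` T.
Hypothesis Tsub_disj : forall a b, a != b -> [set` Tsub a] `&` [set` Tsub b] = set0.
Hypothesis Tsub_cover : \bigcup_(b in [set: 'I_d]) [set` Tsub b] = T.

Lemma Rintegral_cells (P : pred 'I_d) (f : R -> R) :
  mu.-integrable T (EFin \o f) ->
  \int[mu]_(t in T) (if `[< exists b, P b /\ [set` Tsub b] t >] then f t else 0)
  = \sum_(b | P b) \int[mu]_(t in [set` Tsub b]) f t.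
Proof.
move=> intf; set s := [seq b <- index_enum 'I_d | P b].
set U := \big[setU/set0]_(b <- s) [set` Tsub b].
have UE : U = \bigcup_(b in [set` s]) [set` Tsub b] by rewrite bigcup_seq.
have U_sub : U `<=` T by rewrite UE => t [b _]; apply: Tsub_sub.
have mU : measurable U by apply: bigsetU_measurable.
rewrite -big_filter -/s -Rintegral_bigsetU //; first last.
- by apply: integrableS intf.
- by apply/trivIsetP => a b _ _; apply: Tsub_disj.
- by rewrite filter_uniq // index_enum_uniq.
rewrite -/U -(setIidr U_sub) Rintegral_mkcondr; apply: eq_Rintegral => t _.
rewrite patchE; congr (if _ then _ else _); rewrite UE.
apply/asboolP/idP => [[b [Pb tb]]|/set_mem[b sb tb]].
  by apply/mem_set; exists b; rewrite //= mem_filter Pb mem_index_enum.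
by exists b; move: sb; rewrite /= mem_filter => /andP[].
Qed.

Lemma Rintegral_partition (f : R -> R) : mu.-integrable T (EFin \o f) ->
  \int[mu]_(t in T) f t = \sum_b \int[mu]_(t in [set` Tsub b]) f t.
Proof.
move=> intf; rewrite -(Rintegral_cells xpredT) //.
apply: eq_Rintegral => t /set_mem Tt; case: asboolP => // noT; exfalso; apply: noT.
by move: Tt; rewrite -Tsub_cover => -[b _ tb]; exists b.
Qed.

Variables (p m : nat) (lamk : 'I_m -> R) (xi : 'I_m -> R -> R).
Variables (lamr : 'I_p -> R) (V : 'M[R]_p) (Y : 'I_p -> R -> R).
Hypothesis int_Y_xi : forall l i, mu.-integrable T (EFin \o (fun t => Y l t * xi i t)).

Definition cell_coord i j (x : 'I_p * 'I_d) : R := ip [set` Tsub x.2] (Y x.1) (xi i) * V x.1 j.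

Lemma ip_Xhat Q l i :
  ip T (Xhat Tsub Q Y l) (xi i) = \sum_(b | (l, b) \in Q) ip [set` Tsub b] (Y l) (xi i).
Proof.
rewrite /ip -Rintegral_cells //; apply: eq_Rintegral => t _.
by rewrite /Xhat; case: ifP; rewrite ?mul0r.
Qed.

Lemma fMMD2_Xhat Q : fMMD2 T lamk xi lamr V (Xhat Tsub Q Y) =
  \sum_i \sum_j (lamk i * lamr j)^-1 * (\sum_(x in Q) cell_coord i j x) ^+ 2.
Proof.
apply: eq_bigr => i _; apply: eq_bigr => j _; congr (_ * _ ^+ 2).
under eq_bigr do rewrite ip_Xhat big_distrl /=.
by rewrite pair_big_dep; apply: eq_bigl => -[l b].
Qed.

Lemma sum_cell_coord i j :
  \sum_x cell_coord i j x = \sum_l ip T (Y l) (xi i) * V l j.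
Proof.
rewrite -[LHS](pair_big xpredT xpredT (fun l b => cell_coord i j (l, b))) /=.
by apply: eq_bigr => l _; rewrite /ip Rintegral_partition // big_distrl.
Qed.

End Cells.

Theorem corollary2 (R : realType) (dO : measure_display) (Omega : measurableType dO)
  (P : probability Omega R)
  (p d m : nat) (t0 t1 : R) (Tsub : 'I_d -> interval R)
  (Sigma : 'M[R]_p) (kappa : R -> R -> R)
  (X : Omega -> 'I_p -> R -> R)
  (lamk : 'I_m -> R) (xi : 'I_m -> R -> R)
  (lamr : 'I_p -> R) (V : 'M[R]_p) :
  (* T = [t0,t1] is the disjoint union of the subintervals T_1..T_d *)
  t0 <= t1 ->
  (forall a b : 'I_d, a != b -> [set` Tsub a] `&` [set` Tsub b] = set0) ->
  \bigcup_(a in [set: 'I_d]) [set` Tsub a] = Tset t0 t1 ->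
  (* row covariance and kernel *)
  spd Sigma ->
  pd_kernel (Tset t0 t1) kappa ->
  (* X ~ MSP(0, Sigma, kappa): mean zero, covariance Sigma_{kl} kappa(s,t) *)
  (forall k t, measurable_fun setT (fun w => X w k t)) ->
  (forall k t, P.-integrable setT (fun w => (X w k t ^+ 2)%:E)) ->
  (forall k t, (Tset t0 t1) t -> (\int[P]_w (X w k t)%:E = 0)%E) ->
  (forall k l s t, (Tset t0 t1) s -> (Tset t0 t1) t ->
     (\int[P]_w (X w k s * X w l t)%:E = (Sigma k l * kappa s t)%:E)%E) ->
  (* L^2-continuity *)
  (forall k t, (Tset t0 t1) t -> forall e : R, 0 < e -> exists2 delta : R, 0 < delta &
     forall s, (Tset t0 t1) s -> `|s - t| < delta ->
       (\int[P]_w ((X w k s - X w k t) ^+ 2)%:E < e%:E)%E) ->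
  (* sample paths are square integrable on T *)
  (forall w k, sq_int (Tset t0 t1) (X w k)) ->
  (* (lamk i, xi i), i < m: the m largest eigenpairs of K, lamk_m > 0 *)
  (forall i, sq_int (Tset t0 t1) (xi i)) ->
  (forall i j, ip (Tset t0 t1) (xi i) (xi j) = (i == j)%:R) ->
  (forall i s, (Tset t0 t1) s -> kop (Tset t0 t1) kappa (xi i) s = lamk i * xi i s) ->
  (forall i j : 'I_m, (i <= j)%N -> lamk j <= lamk i) ->
  (forall i, 0 < lamk i) ->
  (forall (mu : R) (f : R -> R), sq_int (Tset t0 t1) f ->
     0 < ip (Tset t0 t1) f f ->
     (forall i, ip (Tset t0 t1) f (xi i) = 0) ->
     (forall s, (Tset t0 t1) s -> kop (Tset t0 t1) kappa f s = mu * f s) ->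
     forall i, mu <= lamk i) ->
  (* (lamr j, v_j = col j V): orthonormal eigenpairs of Sigma *)
  V^T *m V = 1%:M ->
  (forall j, Sigma *m col j V = lamr j *: col j V) ->
  forall (w : Omega) (k : 'I_p) (a : 'I_d),
    Theta (Tset t0 t1) Tsub lamk xi lamr V (X w) k a =
    \sum_(i < m) \sum_(j < p) (lamk i * lamr j)^-1 *
      (ip [set` Tsub a] (X w k) (xi i) * V k j *
        \sum_(l < p) ip (Tset t0 t1) (X w l) (xi i) * V l j).
Proof.
move=> _ Tsub_disj Tsub_cover _ _ _ _ _ _ _ X_sq xi_sq _ _ _ _ _ _ _ w k a.
have Tsub_sub b : [set` Tsub b] `<=` Tset t0 t1 by rewrite -Tsub_cover => t tb; exists b.
have mT : measurable (Tset t0 t1) by apply: measurable_itv.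
have int_X_xi l i : (@lebesgue_measure R).-integrable (Tset t0 t1)
    (EFin \o (fun t => X w l t * xi i t)).
  have [mX iX] := X_sq w l; have [mxi ixi] := xi_sq i.
  exact: integrable_mul_of_sqr.
have gameE := fMMD2_Xhat mT Tsub_sub Tsub_disj lamk lamr V int_X_xi.
have cellsE := sum_cell_coord mT Tsub_sub Tsub_disj Tsub_cover V int_X_xi.
rewrite /Theta shapleyE (eq_shapley_value _ gameE).
rewrite shapley_valueD; apply: eq_bigr => i _.
rewrite shapley_valueD; apply: eq_bigr => j _.
by rewrite shapley_valueZ shapley_value_sqr_sum cellsE.
Qed.
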